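(* Let $S\subseteq\mathbb{R}^d$ be a set and $K>0$ such that $\frac{\|p_1-p_2\|}{\|q_1-q_2\|}\le K$ for all $p_1,p_2,q_1,q_2\in S$ with $q_1\ne q_2$. If $S$ is $(p,j,\alpha)$-flat for some $p\in S$, then $S$ is $(q,j,20(K\alpha)^{1/2})$-flat for every $q\in S$.
   Context: A $j$-plane is an affine subspace of dimension $j$. The angle between a vector $v$ and a plane $\Lambda$ is the infimum of the angles between $v$ and vectors $w\in\Lambda-\Lambda$. A set $S$ is $(p,j,\alpha)$-flat (for $p\in S$) if there exists a $j$-plane $\Lambda_p$ such that every vector $p-q$, $q\in S$, makes angle at most $\alpha$ with $\Lambda_p$. *)

From HB Require Import structures.
From mathcomp Require Import all_boot all_order all_algebra.
From mathcomp Require Import all_classical all_reals all_analysis.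
Set Implicit Arguments. Unset Strict Implicit. Unset Printing Implicit Defensive.
Import Order.TTheory GRing.Theory Num.Theory.
Local Open Scope classical_set_scope.
Local Open Scope ring_scope.

Section Flat.
Context {R : realType} {d : nat}.

Definition dotv (u v : 'rV[R]_d) : R := (u *m v^T) 0 0.
Definition vnorm (u : 'rV[R]_d) : R := Num.sqrt (dotv u u).

Definition vangle (u v : 'rV[R]_d) : R := acos (dotv u v / (vnorm u * vnorm v)).

Definition jplane (j : nat) (L : set 'rV[R]_d) : Prop :=
  exists (a : 'rV[R]_d) (U : 'M[R]_d),
    \rank U = j /\ L = [set a + u | u in [set u : 'rV[R]_d | (u <= U)%MS]].

Definition diffset (L : set 'rV[R]_d) : set 'rV[R]_d :=
  [set x - y | x in L & y in L].

(* angle between v and plane L: infimum (in \bar R; +oo if empty) of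
   the angles between v and nonzero w in L - L *)
Definition angle_plane (v : 'rV[R]_d) (L : set 'rV[R]_d) : \bar R :=
  ereal_inf [set (vangle v w)%:E | w in [set w | diffset L w /\ w != 0]].

Definition flat (S : set 'rV[R]_d) (p : 'rV[R]_d) (j : nat) (alpha : R) : Prop :=
  exists L, jplane j L /\
    forall q, S q -> q != p -> (angle_plane (p - q) L <= alpha%:E)%E.

End Flat.

From HB Require Import structures.
From mathcomp Require Import all_boot all_order all_algebra.
From mathcomp Require Import all_classical all_reals all_analysis.
From mathcomp Require Import ring lra.
Set Implicit Arguments. Unset Strict Implicit. Unset Printing Implicit Defensive.
Import Order.TTheory GRing.Theory Num.Theory.
Import numFieldNormedType.Exports.
Local Open Scope classical_set_scope.
Local Open Scope ring_scope.

(* Flatness at p says that each p - r makes angle at most alpha with the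
   direction space U of the plane; as sin t <= t, p - r then lies within
   distance (alpha + eps) |p - r| of U.  Writing q - q' = (p - q') - (p - q)
   and using |p - r| <= K |q - q'|, the vector q - q' lies within distance
   delta |q - q'| of U for delta = 2 K (alpha + eps), and a relative distance
   delta <= 1/2 forces an angle of at most 2 delta.  This bounds the angle by
   4 K alpha <= 20 sqrt (K alpha) when K alpha < 1/4; otherwise
   20 sqrt (K alpha) >= 10 > pi bounds every angle. *)

Section TrigBounds.
Context {R : realType}.

Lemma ge0_derive_le (f df : R -> R) (x : R) : 0 <= x ->
  (forall y : R, is_derive y (1 : R) f (df y)) ->
  (forall y, 0 <= y -> 0 <= df y) -> f 0 <= f x.
Proof.
move=> x0 fd dfp.
have cont : {within [set` `[0, x]], continuous f}.
  by apply: derivable_within_continuous => y _; exact: ex_derive.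
have [c cx fxE] := MVT_segment x0 (fun y _ => fd y) cont.
rewrite -subr_ge0 fxE mulr_ge0 ?subr_ge0 // dfp //.
by move: cx; rewrite in_itv /= => /andP[].
Qed.

Lemma sin_le_id (x : R) : 0 <= x -> sin x <= x.
Proof.
move=> x0; rewrite -subr_ge0.
have := @ge0_derive_le (id - sin) (fun y => 1 - cos y) _ x0.
by rewrite !fctE sin0 subr0; apply=> y _; rewrite subr_ge0 cos_le1.
Qed.

Lemma cos_ge_taylor2 (x : R) : 0 <= x -> 1 - x ^+ 2 / 2 <= cos x.
Proof.
move=> x0.
(* With [cos] or [sin] as the first summand the [is_derive] instance search
   below becomes very slow. *)
have : (cst 2^-1 * id ^+ 2 + cos) 0 <= (cst 2^-1 * id ^+ 2 + cos) x.
  apply: (@ge0_derive_le _ (fun y => y - sin y) _ x0) => [y|y y0].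
    by apply: is_derive_eq; rewrite /GRing.scale /=; field.
  by rewrite subr_ge0 sin_le_id.
rewrite !fctE /= cos0; lra.
Qed.

Lemma sin_ge_taylor3 (x : R) : 0 <= x -> x - x ^+ 3 / 6 <= sin x.
Proof.
move=> x0.
have : (cst 6^-1 * id ^+ 3 - id + sin) 0 <= (cst 6^-1 * id ^+ 3 - id + sin) x.
  apply: (@ge0_derive_le _ (fun y => cos y - (1 - y ^+ 2 / 2)) _ x0) => [y|y y0].
    by apply: is_derive_eq; rewrite /GRing.scale /=; field.
  by rewrite subr_ge0 cos_ge_taylor2.
rewrite !fctE /= sin0; lra.
Qed.

Lemma cos_le_taylor4 (x : R) : 0 <= x -> cos x <= 1 - x ^+ 2 / 2 + x ^+ 4 / 24.
Proof.
move=> x0.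
have : (cst 24^-1 * id ^+ 4 - cst 2^-1 * id ^+ 2 - cos) 0 <=
       (cst 24^-1 * id ^+ 4 - cst 2^-1 * id ^+ 2 - cos) x.
  apply: (@ge0_derive_le _ (fun y => sin y - (y - y ^+ 3 / 6)) _ x0) => [y|y y0].
    by apply: is_derive_eq; rewrite /GRing.scale /=; field.
  by rewrite subr_ge0 sin_ge_taylor3.
rewrite !fctE /= cos0; lra.
Qed.

Lemma acos_le (c t : R) : -1 <= c <= 1 -> 0 <= t <= pi -> cos t <= c ->
  acos c <= t.
Proof.
move=> c11 t0pi ct; rewrite leNgt; apply/negP => tc.
have acos_itv : acos c \in `[0, pi] by rewrite in_itv /= acos_ge0 ?acos_lepi.
have t_itv : t \in `[0, pi] by rewrite in_itv.
have := tc; rewrite -(ltr_cos t_itv acos_itv) acosK ?in_itv //.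
by rewrite ltNge ct.
Qed.

Lemma acos_le_quadratic (c t : R) : -1 <= c <= 1 -> 0 <= t <= 2 ->
  1 - t ^+ 2 / 3 <= c -> acos c <= t.
Proof.
move=> c11 /andP[t0 t2] tc; apply: acos_le => //.
  by rewrite t0 (le_trans t2) ?pi_ge2.
apply: le_trans (cos_le_taylor4 t0) (le_trans _ tc).
have t2sqr : t ^+ 2 <= 4 by rewrite expr2; nra.
have -> : t ^+ 4 = t ^+ 2 * t ^+ 2 by rewrite -exprD.
have := sqr_ge0 t; nra.
Qed.

End TrigBounds.

Section Euclid.
Context {R : realType} {d : nat}.
Implicit Types (u v w : 'rV[R]_d) (a : R).

Lemma dotvE u v : dotv u v = \sum_i u 0 i * v 0 i.
Proof. by rewrite /dotv mxE; apply: eq_bigr => i _; rewrite mxE. Qed.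

Lemma dotvC u v : dotv u v = dotv v u.
Proof. by rewrite /dotv -[u *m _]trmxK trmx_mul trmxK [LHS]mxE. Qed.

Lemma dotvDl u v w : dotv (u + v) w = dotv u w + dotv v w.
Proof. by rewrite /dotv mulmxDl mxE. Qed.

Lemma dotvZl a u w : dotv (a *: u) w = a * dotv u w.
Proof. by rewrite /dotv -scalemxAl mxE. Qed.

Lemma dotvBl u v w : dotv (u - v) w = dotv u w - dotv v w.
Proof. by rewrite dotvDl -scaleN1r dotvZl mulN1r. Qed.

Lemma dotv0l w : dotv 0 w = 0.
Proof. by rewrite /dotv mul0mx mxE. Qed.

Lemma dotvDr u v w : dotv w (u + v) = dotv w u + dotv w v.
Proof. by rewrite dotvC dotvDl !(dotvC w). Qed.

Lemma dotvBr u v w : dotv w (u - v) = dotv w u - dotv w v.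
Proof. by rewrite dotvC dotvBl !(dotvC w). Qed.

Lemma dotvZr a u w : dotv w (a *: u) = a * dotv w u.
Proof. by rewrite dotvC dotvZl dotvC. Qed.

Lemma dotvv_ge0 u : 0 <= dotv u u.
Proof. by rewrite dotvE sumr_ge0 // => i _; rewrite -expr2 sqr_ge0. Qed.

Lemma dotvv_eq0 u : (dotv u u == 0) = (u == 0).
Proof.
apply/eqP/eqP => [|->]; last exact: dotv0l.
rewrite dotvE => /psumr_eq0P u2_eq0; apply/rowP => i; rewrite mxE.
have /(_ i isT)/eqP : forall i, true -> u 0 i * u 0 i = 0.
  by apply: u2_eq0 => j _; rewrite -expr2 sqr_ge0.
by rewrite mulf_eq0 orbb => /eqP.
Qed.

Lemma dotvv_gt0 u : (0 < dotv u u) = (u != 0).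
Proof. by rewrite lt_neqAle dotvv_ge0 andbT eq_sym dotvv_eq0. Qed.

Lemma vnorm_ge0 u : 0 <= vnorm u.
Proof. exact: sqrtr_ge0. Qed.

Lemma vnorm_sqr u : vnorm u ^+ 2 = dotv u u.
Proof. by rewrite sqr_sqrtr // dotvv_ge0. Qed.

Lemma vnorm_gt0 u : (0 < vnorm u) = (u != 0).
Proof. by rewrite sqrtr_gt0 dotvv_gt0. Qed.

Lemma vnorm0 : vnorm (0 : 'rV[R]_d) = 0.
Proof. by rewrite /vnorm dotv0l sqrtr0. Qed.

Lemma vnormN u : vnorm (- u) = vnorm u.
Proof. by rewrite /vnorm -scaleN1r dotvZl dotvZr !mulN1r opprK. Qed.

Lemma dotv_sqr_le u v : dotv u v ^+ 2 <= dotv u u * dotv v v.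
Proof.
have [->|v0] := eqVneq v 0; first by rewrite dotvC !dotv0l expr0n mulr0.
have vv_gt0 : 0 < dotv v v by rewrite dotvv_gt0.
have := dotvv_ge0 (dotv v v *: u - dotv u v *: v).
rewrite !(dotvBl, dotvBr, dotvZl, dotvZr) (dotvC v u) => H.
have : 0 <= dotv v v * (dotv u u * dotv v v - dotv u v ^+ 2) by nra.
by rewrite pmulr_rge0 // subr_ge0.
Qed.

Lemma norm_dotv_le u v : `|dotv u v| <= vnorm u * vnorm v.
Proof.
rewrite /vnorm -sqrtrM ?dotvv_ge0 // -sqrtr_sqr ler_sqrt ?dotv_sqr_le //.
by rewrite mulr_ge0 ?dotvv_ge0.
Qed.

Lemma vnormD u v : vnorm (u + v) <= vnorm u + vnorm v.
Proof.
have uv_ge0 := addr_ge0 (vnorm_ge0 u) (vnorm_ge0 v).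
rewrite -(ger0_norm uv_ge0) -sqrtr_sqr ler_sqrt ?sqr_ge0 //.
rewrite !(dotvDl, dotvDr) (dotvC v u) -!vnorm_sqr.
have := norm_dotv_le u v; rewrite ler_norml => /andP[_ uv_le]; nra.
Qed.

Lemma vnormB u v : vnorm (u - v) <= vnorm u + vnorm v.
Proof. by rewrite -(vnormN v) vnormD. Qed.

End Euclid.

Section Angles.
Context {R : realType} {d : nat}.
Implicit Types (v w z : 'rV[R]_d) (delta : R).

Lemma dotv_ratio_itv v w : -1 <= dotv v w / (vnorm v * vnorm w) <= 1.
Proof.
rewrite -ler_norml normrM normfV [`|_ * _|]ger0_norm ?mulr_ge0 ?vnorm_ge0 //.
(* When v or w vanishes the ratio is 0, since x / 0 = 0. *)
have [->|vw0] := eqVneq (vnorm v * vnorm w) 0; first by rewrite invr0 mulr0.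
rewrite ler_pdivrMr ?mul1r ?norm_dotv_le //.
by rewrite lt_neqAle eq_sym vw0 mulr_ge0 ?vnorm_ge0.
Qed.

Lemma vangle_ge0 v w : 0 <= vangle v w.
Proof. exact/acos_ge0/dotv_ratio_itv. Qed.

Lemma vangle_le_pi v w : vangle v w <= pi.
Proof. exact/acos_lepi/dotv_ratio_itv. Qed.

Lemma vnorm_sub_proj v w : w != 0 ->
  vnorm (v - (dotv v w / dotv w w) *: w) = vnorm v * sin (vangle v w).
Proof.
move=> w0; have [->|v0] := eqVneq v 0.
  by rewrite dotv0l mul0r scale0r subr0 vnorm0 mul0r.
rewrite sin_acos ?dotv_ratio_itv // {1}/vnorm -sqrtrM ?dotvv_ge0 //.
congr Num.sqrt.
rewrite !(dotvBl, dotvBr, dotvZl, dotvZr) (dotvC w v).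
rewrite expr_div_n exprMn !vnorm_sqr.
by field; rewrite ?gt_eqF ?dotvv_gt0.
Qed.

Lemma approx_neq0 v z delta : v != 0 -> delta < 1 ->
  vnorm (v - z) <= delta * vnorm v -> z != 0.
Proof.
move=> v0 delta_lt1; apply: contraTneq => ->.
by rewrite subr0 -ltNge gtr_pMl ?vnorm_gt0.
Qed.

Lemma dotv_ge_approx v z delta : v != 0 -> 0 <= delta <= 1 / 2 ->
  vnorm (v - z) <= delta * vnorm v ->
  (1 - delta ^+ 2) * (vnorm v * vnorm z) <= dotv v z.
Proof.
move=> v0 /andP[delta_ge0 delta_le] vz.
have vz_sqr : vnorm (v - z) ^+ 2 = vnorm v ^+ 2 - 2 * dotv v z + vnorm z ^+ 2.
  by rewrite !vnorm_sqr !(dotvBl, dotvBr) (dotvC z v); ring.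
have tri : vnorm v <= vnorm z + vnorm (v - z).
  by rewrite -[v in vnorm v](subrK z v) addrC vnormD.
move: vz_sqr tri vz (vnorm_gt0 v) (vnorm_ge0 (v - z)); rewrite v0.
set a := vnorm v; set b := vnorm z; set e := vnorm (v - z); set m := dotv v z.
move=> vz_sqr tri vz a_gt0 e_ge0.
(* The claim amounts to (a - b)^2 + delta^2 a (2 b - a) >= 0, and
   2 b >= a because b >= (1 - delta) a. *)
have e_sqr : e ^+ 2 <= delta ^+ 2 * a ^+ 2 by nra.
have : 0 <= delta ^+ 2 * (a * (2 * b - a)) by rewrite mulr_ge0 ?sqr_ge0 //; nra.
have := sqr_ge0 (a - b); nra.
Qed.

Lemma vangle_le_approx v z delta : v != 0 -> 0 <= delta <= 1 / 2 ->
  vnorm (v - z) <= delta * vnorm v -> vangle v z <= 2 * delta.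
Proof.
move=> v0 delta_itv vz; have /andP[delta_ge0 delta_le] := delta_itv.
have z0 : z != 0 by apply: approx_neq0 v0 _ vz; lra.
apply: acos_le_quadratic; first exact: dotv_ratio_itv.
  by apply/andP; split; lra.
rewrite ler_pdivlMr ?mulr_gt0 ?vnorm_gt0 //.
apply: le_trans (dotv_ge_approx v0 delta_itv vz).
rewrite ler_pM2r ?mulr_gt0 ?vnorm_gt0 //.
have := sqr_ge0 delta; lra.
Qed.

End Angles.

Lemma lee_fin_gt_itvoo {R : realType} (x : \bar R) (a b : R) : a < b ->
  (forall y, a < y < b -> (x <= y%:E)%E) -> (x <= a%:E)%E.
Proof.
move=> ab x_le; apply/lee_addgt0Pr => e e_gt0.
apply: le_trans (x_le (Num.min (a + e) ((a + b) / 2)) _) _.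
  rewrite lt_min gt_min; apply/andP; split; last by apply/orP; right; lra.
  by apply/andP; split; lra.
by rewrite -EFinD lee_fin ge_min lexx.
Qed.

Section Planes.
Context {R : realType} {d : nat}.
Implicit Types (v w : 'rV[R]_d) (L : set 'rV[R]_d) (U : 'M[R]_d).

Definition affine_plane (a : 'rV[R]_d) U : set 'rV[R]_d :=
  [set a + u | u in [set u : 'rV[R]_d | (u <= U)%MS]].

Lemma diffset_affine a U w : diffset (affine_plane a U) w <-> (w <= U)%MS.
Proof.
split=> [[_ [u1 U_u1 <-] [_ [u2 U_u2 <-] <-]]|U_w].
  by rewrite opprD addrACA subrr add0r addmx_sub ?eqmx_opp.
exists (a + w); first by exists w.
exists (a + 0); first by exists 0; rewrite //= sub0mx.
by rewrite addr0 addrAC subrr add0r.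
Qed.

Lemma angle_plane_ge0 v L : (0 <= angle_plane v L)%E.
Proof.
rewrite leNgt; apply/negP => /ereal_inf_lt [_ [w _ <-]].
by rewrite lte_fin ltNge vangle_ge0.
Qed.

Lemma angle_plane_le v L w : diffset L w -> w != 0 ->
  (angle_plane v L <= (vangle v w)%:E)%E.
Proof. by move=> Lw w0; apply: ereal_inf_lbound; exists w. Qed.

Lemma angle_plane_lt v L x : (angle_plane v L < x%:E)%E ->
  exists2 w, diffset L w /\ w != 0 & vangle v w < x.
Proof.
by case/ereal_inf_lt => _ [w Lw <-]; rewrite lte_fin => ?; exists w.
Qed.

Definition approx_in U (phi : R) v :=
  exists2 z, (z <= U)%MS & vnorm (v - z) <= phi * vnorm v.

Lemma approx_in0 U phi : approx_in U phi 0.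
Proof. by exists 0; rewrite ?sub0mx // subr0 vnorm0 mulr0. Qed.

Lemma approx_in_angle_plane a U v phi :
  (angle_plane v (affine_plane a U) < phi%:E)%E -> approx_in U phi v.
Proof.
case/angle_plane_lt => w [/diffset_affine U_w w0] vw_lt.
exists ((dotv v w / dotv w w) *: w); first exact: scalemx_sub.
rewrite vnorm_sub_proj // mulrC ler_wpM2r ?vnorm_ge0 //.
exact/ltW/(le_lt_trans (sin_le_id (vangle_ge0 v w))).
Qed.

Lemma approx_inB U phi c v w : 0 <= phi ->
  vnorm v <= c * vnorm (v - w) -> vnorm w <= c * vnorm (v - w) ->
  approx_in U phi v -> approx_in U phi w -> approx_in U (2 * c * phi) (v - w).
Proof.
move=> phi_ge0 v_le w_le [zv U_zv vz] [zw U_zw wz].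
exists (zv - zw); first by rewrite addmx_sub ?eqmx_opp.
have -> : v - w - (zv - zw) = (v - zv) - (w - zw).
  by rewrite !opprB addrACA [RHS]addrACA [- w + _]addrC.
apply: le_trans (vnormB _ _) _; nra.
Qed.

Lemma angle_plane_approx a U v delta : v != 0 -> 0 <= delta <= 1 / 2 ->
  approx_in U delta v -> (angle_plane v (affine_plane a U) <= (2 * delta)%:E)%E.
Proof.
move=> v0 delta_itv [z U_z vz].
have z0 : z != 0 by apply: approx_neq0 v0 _ vz; case/andP: delta_itv; lra.
apply: le_trans (angle_plane_le _ _ z0) _; first exact/diffset_affine.
by rewrite lee_fin vangle_le_approx.
Qed.

End Planes.

Section FlatPlane.
Context {R : realType} {d : nat}.
Variables (S : set 'rV[R]_d) (p a : 'rV[R]_d) (U : 'M[R]_d) (alpha : R).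
Hypothesis flat_p : forall r, S r -> r != p ->
  (angle_plane (p - r) (affine_plane a U) <= alpha%:E)%E.

Lemma approx_in_flat phi r : alpha < phi -> S r -> approx_in U phi (p - r).
Proof.
move=> alpha_lt Sr; have [->|rp] := eqVneq r p; first by rewrite subrr; apply: approx_in0.
apply: (approx_in_angle_plane (a := a)); apply: le_lt_trans (flat_p Sr rp) _.
by rewrite lte_fin.
Qed.

Lemma angle_plane_flat (K : R) q q' : 0 < K -> 0 <= alpha -> 4 * K * alpha < 1 ->
  S q -> S q' -> q != q' ->
  vnorm (p - q) <= K * vnorm (q - q') -> vnorm (p - q') <= K * vnorm (q - q') ->
  (angle_plane (q - q') (affine_plane a U) <= (4 * K * alpha)%:E)%E.
Proof.
move=> K_gt0 alpha_ge0 small Sq Sq' qq' pq pq'.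
have qq'0 : q - q' != 0 by rewrite subr_eq0.
have vE : q - q' = (p - q') - (p - q) by rewrite opprB [RHS]addrC addrA subrK.
rewrite vE in pq pq' qq'0 *.
apply: (lee_fin_gt_itvoo small) => y /andP[y_gt y_lt1].
have phi_ge0 : 0 <= y / (4 * K) by rewrite divr_ge0 ?mulr_ge0 ?ltW //; nra.
have phi_gt : alpha < y / (4 * K) by rewrite ltr_pdivlMr ?mulr_gt0 // mulrC.
have := approx_inB phi_ge0 pq' pq (approx_in_flat phi_gt Sq') (approx_in_flat phi_gt Sq).
rewrite (_ : 2 * K * (y / (4 * K)) = y / 2); last by field; rewrite gt_eqF.
move=> approx_v.
apply: le_trans (angle_plane_approx a qq'0 _ approx_v) _; last by rewrite lee_fin; lra.
by apply/andP; split; nra.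
Qed.

End FlatPlane.

Theorem lemma7 (R : realType) (d : nat) (S : set 'rV[R]_d) (K : R) (j : nat)
  (alpha : R) (p : 'rV[R]_d) :
  0 < K ->
  (forall p1 p2 q1 q2, S p1 -> S p2 -> S q1 -> S q2 -> q1 != q2 ->
     vnorm (p1 - p2) / vnorm (q1 - q2) <= K) ->
  S p -> flat S p j alpha ->
  forall q, S q -> flat S q j (20%:R * Num.sqrt (K * alpha)).
Proof.
move=> K_gt0 K_ratio Sp [_ [[a [U [rkU ->]]] flat_p]] q Sq.
exists (affine_plane a U); split; first by exists a, U.
move=> q' Sq' q'q.
have [r Sr rp] : exists2 r, S r & r != p.
  by have [qp|] := eqVneq q p; [exists q'; rewrite -?qp | exists q].
have alpha_ge0 : 0 <= alpha.
  by rewrite -lee_fin; apply: le_trans (angle_plane_ge0 _ _) (flat_p r Sr rp).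
have K_bound r' : S r' -> vnorm (p - r') <= K * vnorm (q - q').
  move=> Sr'; rewrite -ler_pdivrMr ?vnorm_gt0 ?subr_eq0 1?eq_sym //.
  by apply: K_ratio; rewrite // eq_sym.
have s_ge0 := sqrtr_ge0 (K * alpha).
have s_sqr : Num.sqrt (K * alpha) ^+ 2 = K * alpha.
  by rewrite sqr_sqrtr // mulr_ge0 // ltW.
have [small|large] := ltP (K * alpha) (1 / 4).
  apply: le_trans (angle_plane_flat flat_p K_gt0 alpha_ge0 _ Sq Sq' _ _ _) _.
  - lra.
  - by rewrite eq_sym.
  - exact: K_bound.
  - exact: K_bound.
  - by rewrite lee_fin; nra.
have [w [Lw w0] _] : exists2 w, diffset (affine_plane a U) w /\ w != 0 &
    vangle (p - r) w < alpha + 1.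
  by apply: angle_plane_lt; apply: le_lt_trans (flat_p r Sr rp) _; rewrite lte_fin ltrDl.
apply: le_trans (angle_plane_le _ Lw w0) _; rewrite lee_fin.
apply: le_trans (vangle_le_pi _ _) _.
have := @pihalf_lt2 R; nra.
Qed.
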